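(* Let $I:[0,1]^2\to[0,1]$ be a fuzzy implication function, let $U_1,U_2$ be disjunctive uninorms with neutral elements $e_1,e_2\in\,]0,1[$ respectively, and let $N_1,N_2$ be fuzzy negations such that $$I(x,y)=U_1(N_1(x),y)=U_2(N_2(x),y)\quad\text{for all }x,y\in[0,1].$$ Then: (i) if $U_1=U_2$, then $N_1=N_2$; (ii) if $N_1,N_2$ are continuous and $N_1=N_2$, then $U_1=U_2$; (iii) if $e_1=e_2$ and $N_1,N_2$ are continuous, then $U_1=U_2$ and $N_1=N_2$.
   Context: A fuzzy negation is a non-increasing map $N:[0,1]\to[0,1]$ with $N(0)=1$, $N(1)=0$. A uninorm is a map $U:[0,1]^2\to[0,1]$ that is commutative, associative, non-decreasing in each variable, and has a neutral element $e\in[0,1]$ ($U(x,e)=x$ for all $x$). A uninorm is disjunctive if $U(1,0)=1$. A fuzzy implication function is a map $I:[0,1]^2\to[0,1]$ that is non-increasing in the first variable, non-decreasing in the second, and satisfies $I(0,0)=I(1,1)=1$, $I(1,0)=0$. *)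

(* concrete reals R. Functions on [0,1] are modelled as
   R -> R (resp. R -> R -> R) whose values outside [0,1] are irrelevant:
   all axioms and all conclusions are quantified over [0,1] only. *)
From Stdlib Require Import Reals.
Open Scope R_scope.

Definition in01 (x : R) : Prop := 0 <= x <= 1.

Definition fuzzy_negation (N : R -> R) : Prop :=
  (forall x, in01 x -> in01 (N x)) /\
  (forall x y, in01 x -> in01 y -> x <= y -> N y <= N x) /\
  N 0 = 1 /\ N 1 = 0.

Definition uninorm (U : R -> R -> R) (e : R) : Prop :=
  in01 e /\
  (forall x y, in01 x -> in01 y -> in01 (U x y)) /\
  (forall x y, in01 x -> in01 y -> U x y = U y x) /\
  (forall x y z, in01 x -> in01 y -> in01 z -> U x (U y z) = U (U x y) z) /\
  (forall x1 x2 y, in01 x1 -> in01 x2 -> in01 y -> x1 <= x2 -> U x1 y <= U x2 y) /\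
  (forall x y1 y2, in01 x -> in01 y1 -> in01 y2 -> y1 <= y2 -> U x y1 <= U x y2) /\
  (forall x, in01 x -> U x e = x).

Definition disjunctive (U : R -> R -> R) : Prop := U 1 0 = 1.

Definition fuzzy_implication (I : R -> R -> R) : Prop :=
  (forall x y, in01 x -> in01 y -> in01 (I x y)) /\
  (forall x1 x2 y, in01 x1 -> in01 x2 -> in01 y -> x1 <= x2 -> I x2 y <= I x1 y) /\
  (forall x y1 y2, in01 x -> in01 y1 -> in01 y2 -> y1 <= y2 -> I x y1 <= I x y2) /\
  I 0 0 = 1 /\ I 1 1 = 1 /\ I 1 0 = 0.

Definition continuous01 (N : R -> R) : Prop :=
  forall x, in01 x -> forall eps, eps > 0 -> exists delta, delta > 0 /\
    forall y, in01 y -> Rabs (y - x) < delta -> Rabs (N y - N x) < eps.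

Definition eq01 (f g : R -> R) : Prop := forall x, in01 x -> f x = g x.
Definition eq01_2 (f g : R -> R -> R) : Prop :=
  forall x y, in01 x -> in01 y -> f x y = g x y.

(* Evaluating [I x y = U (N x) y] at the neutral element [y = e] gives
   [I x e = N x], so the negation is determined by [I] and [e]; this yields (i)
   and the equality of negations in (iii).  Conversely, a continuous negation
   maps [0,1] onto [0,1] by the intermediate value theorem, so every first
   argument of [U] has the form [N x] and [U] is determined by [I] and [N];
   this yields (ii) and the rest of (iii). *)
From Stdlib Require Import Reals Lra.
Open Scope R_scope.

Definition clamp01 (x : R) : R := Rmax 0 (Rmin 1 x).

Lemma clamp01_in01 (x : R) : in01 (clamp01 x).
Proof. unfold clamp01, in01, Rmax, Rmin; repeat destruct Rle_dec; lra. Qed.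

Lemma clamp01_id (x : R) : in01 x -> clamp01 x = x.
Proof. unfold clamp01, in01, Rmax, Rmin; intros; repeat destruct Rle_dec; lra. Qed.

Lemma clamp01_1lipschitz (x y : R) : Rabs (clamp01 y - clamp01 x) <= Rabs (y - x).
Proof.
  unfold clamp01, Rmax, Rmin; repeat destruct Rle_dec; unfold Rabs;
    repeat destruct Rcase_abs; lra.
Qed.

Lemma continuity_clamp01 (f : R -> R) :
  continuous01 f -> continuity (fun x => f (clamp01 x)).
Proof.
  intros Hf x eps Heps.
  destruct (Hf (clamp01 x) (clamp01_in01 x) eps Heps) as [d [Hd Hclose]].
  exists d; split; [exact Hd |].
  intros y [_ Hy]; apply Hclose; [apply clamp01_in01 |].
  eapply Rle_lt_trans; [apply clamp01_1lipschitz | exact Hy].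
Qed.

Lemma continuous01_IVT_decreasing (f : R -> R) (a : R) :
  continuous01 f -> f 1 <= a <= f 0 -> exists x, in01 x /\ f x = a.
Proof.
  intros Hf Ha.
  set (g := fun x => f (clamp01 x) - a).
  assert (Hg : continuity g).
  { apply continuity_minus; [exact (continuity_clamp01 f Hf) | apply continuity_const].
    now intros u v. }
  assert (Hsign : g 0 * g 1 <= 0).
  { unfold g; rewrite !clamp01_id by (unfold in01; lra); nra. }
  destruct (IVT_cor g 0 1 Hg ltac:(lra) Hsign) as [x [Hx Hgx]].
  exists x; split; [exact Hx |].
  unfold g in Hgx; rewrite clamp01_id in Hgx by exact Hx; lra.
Qed.

Lemma continuous_negation_surjective (N : R -> R) :
  fuzzy_negation N -> continuous01 N -> forall a, in01 a -> exists x, in01 x /\ N x = a.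
Proof.
  intros (_ & _ & N0 & N1) HC a Ha.
  apply continuous01_IVT_decreasing; [exact HC | rewrite N0, N1; exact Ha].
Qed.

Lemma implication_at_neutral (I U : R -> R -> R) (N : R -> R) (e : R) :
  uninorm U e -> fuzzy_negation N ->
  (forall x y, in01 x -> in01 y -> I x y = U (N x) y) ->
  forall x, in01 x -> I x e = N x.
Proof.
  intros (He & _ & _ & _ & _ & _ & Hneutral) (HN & _) HI x Hx.
  rewrite HI by assumption; apply Hneutral, HN, Hx.
Qed.

Lemma uninorms_eq01_of_surjective_negation (I U1 U2 : R -> R -> R) (N : R -> R) :
  (forall a, in01 a -> exists x, in01 x /\ N x = a) ->
  (forall x y, in01 x -> in01 y -> I x y = U1 (N x) y /\ I x y = U2 (N x) y) ->
  eq01_2 U1 U2.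
Proof.
  intros Hsurj HI a y Ha Hy.
  destruct (Hsurj a Ha) as [x [Hx <-]].
  destruct (HI x y Hx Hy) as [H1 H2]; congruence.
Qed.

Theorem proposition1 (I U1 U2 : R -> R -> R) (N1 N2 : R -> R) (e1 e2 : R) :
  fuzzy_implication I ->
  uninorm U1 e1 -> 0 < e1 < 1 -> disjunctive U1 ->
  uninorm U2 e2 -> 0 < e2 < 1 -> disjunctive U2 ->
  fuzzy_negation N1 -> fuzzy_negation N2 ->
  (forall x y, in01 x -> in01 y -> I x y = U1 (N1 x) y /\ I x y = U2 (N2 x) y) ->
  (eq01_2 U1 U2 -> eq01 N1 N2) /\
  (continuous01 N1 -> continuous01 N2 -> eq01 N1 N2 -> eq01_2 U1 U2) /\
  (e1 = e2 -> continuous01 N1 -> continuous01 N2 -> eq01_2 U1 U2 /\ eq01 N1 N2).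
Proof.
  intros _ HU1 _ _ HU2 _ _ HN1 HN2 HI.
  pose proof (fun x y Hx Hy => proj1 (HI x y Hx Hy)) as HI1.
  pose proof (fun x y Hx Hy => proj2 (HI x y Hx Hy)) as HI2.
  pose proof (implication_at_neutral I U1 N1 e1 HU1 HN1 HI1) as HN1e1.
  pose proof (implication_at_neutral I U2 N2 e2 HU2 HN2 HI2) as HN2e2.
  assert (Hii : continuous01 N1 -> eq01 N1 N2 -> eq01_2 U1 U2).
  { intros C1 EN; apply (uninorms_eq01_of_surjective_negation I U1 U2 N1).
    - exact (continuous_negation_surjective N1 HN1 C1).
    - intros x y Hx Hy; rewrite (EN x Hx) at 2; exact (HI x y Hx Hy). }
  split; [| split].
  - intros EU x Hx.
    assert (HI2' : forall x y, in01 x -> in01 y -> I x y = U1 (N2 x) y).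
    { intros u y Hu Hy; rewrite EU by (try apply HN2; assumption); exact (HI2 u y Hu Hy). }
    rewrite <- (HN1e1 x Hx); exact (implication_at_neutral I U1 N2 e1 HU1 HN2 HI2' x Hx).
  - intros C1 _; exact (Hii C1).
  - intros <- C1 _.
    assert (EN : eq01 N1 N2) by (intros x Hx; rewrite <- HN1e1, <- HN2e2; auto).
    split; [exact (Hii C1 EN) | exact EN].
Qed.
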